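(* Let $\mathcal{F}:\mathcal{C}\to\mathcal{C}$ be an arbitrary covariant or contravariant functor, and let $X$ be a connected space on which a group $G$ acts by homeomorphisms. Then for every positive integer $n$, the space $(\mathbb{T}(n)\mathcal{F})(X)$ is also a $G$-space, with $g\in G$ acting by the map induced (functorially in the sense below) by the homeomorphism $g:X\to X$.
   Context: $\mathcal{C}$ is the category of topological spaces and continuous maps; connected spaces are tacitly assumed to have a good covering space theory. For a covering $X'\to X$, $\mathcal{D}(X'/X)$ (all deck transformations) acts on $\mathcal{F}(X')$ through $\mathcal{F}$. The geometric Hecke operator is $(\mathbb{T}(n)\mathcal{F})(X)=\coprod_{[X'\to X]}\mathcal{F}(X')/\mathcal{D}(X'/X)$ over isomorphism classes of connected $n$-sheeted coverings. A map $f:X\to Y$ of connected spaces inducing an isomorphism on $\pi_1$ induces a map $(\mathbb{T}(n)\mathcal{F})(X)\to(\mathbb{T}(n)\mathcal{F})(Y)$ (for covariant $\mathcal{F}$; the opposite direction for contravariant $\mathcal{F}$) as follows: for a connected $n$-sheeted covering $p:(X',x_0')\to(X,x_0)$, take the connected covering $(Y',y_0')\to(Y,f(x_0))$ corresponding to $f_*(p_*\pi_1(X',x_0'))$ and the lift $\tilde f:X'\to Y'$ of $f$ with $\tilde f(x_0')=y_0'$; then $\mathcal{F}(\tilde f)$ induces the map on the corresponding summands. This induced map is independent of choices and compatible with composition. *)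

From HB Require Import structures.
From mathcomp Require Import all_boot all_order all_algebra.
From mathcomp Require Import all_classical all_reals.
From mathcomp Require Import topology Rstruct Rstruct_topology.

Set Implicit Arguments.
Unset Strict Implicit.
Unset Printing Implicit Defensive.

Import Order.TTheory GRing.Theory Num.Theory.
Local Open Scope classical_set_scope.
Local Open Scope ring_scope.

Notation R := Rdefinitions.R.
Definition unitI : set R := `[0%R, 1%R].

Definition is_path (T : topologicalType) (a b : T) (gam : R -> T) : Prop :=
  {within unitI, continuous gam} /\ gam 0%R = a /\ gam 1%R = b.

Definition path_homotopic (T : topologicalType) (a b : T) (gam del : R -> T) : Prop :=
  is_path a b gam /\ is_path a b del /\
  exists H : R * R -> T,
    {within unitI `*` unitI, continuous H} /\
    (forall s, unitI s -> H (s, 0%R) = gam s) /\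
    (forall s, unitI s -> H (s, 1%R) = del s) /\
    (forall t, unitI t -> H (0%R, t) = a) /\
    (forall t, unitI t -> H (1%R, t) = b).

Definition loops (T : topologicalType) (a : T) : set (R -> T) :=
  [set gam | is_path a a gam].

(* image under f_* of a (homotopy-saturated) set S of loops at a, as the
   set of loops at f a homotopic to f o gam for some gam in S; this
   represents the subgroup f_*(S) of pi_1(U, f a) *)
Definition push (T U : topologicalType) (f : T -> U) (a : T)
    (S : set (R -> T)) : set (R -> U) :=
  [set del | exists2 gam, S gam & path_homotopic (f a) (f a) del (f \o gam)].

(* p_* pi_1(X', x0') as a set of loops at p x0' *)
Definition pi1_image (T U : topologicalType) (p : T -> U) (x0 : T) : set (R -> U) :=
  push p x0 (loops x0).

Definition locally_path_connected (T : topologicalType) : Prop :=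
  forall (x : T) (N : set T), nbhs x N ->
    exists V : set T, [/\ open V, V x, V `<=` N &
      forall y z, V y -> V z ->
        exists gam, is_path y z gam /\ gam @` unitI `<=` V].

Definition semilocally_simply_connected (T : topologicalType) : Prop :=
  forall x : T, exists U : set T, nbhs x U /\
    forall gam, is_path x x gam -> gam @` unitI `<=` U ->
      path_homotopic x x gam (fun _ => x).

Definition homeo_onto (T U : topologicalType) (p : T -> U) (V : set T) (W : set U) :=
  set_inj V p /\ p @` V = W /\
  (forall O : set T, open O -> O `<=` V -> open (p @` O)).

Definition is_covering (T U : topologicalType) (p : T -> U) : Prop :=
  continuous p /\
  forall x : U, exists W : set U, [/\ open W, W x &
    exists S : set (set T),
      [/\ (forall V, S V -> open V /\ homeo_onto p V W),
          (forall V V', S V -> S V' -> V `&` V' !=set0 -> V = V') &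
          p @^-1` W = \bigcup_(V in S) V]].

Definition n_sheeted (n : nat) (T U : topologicalType) (p : T -> U) : Prop :=
  forall x : U, (p @^-1` [set x] #= [set: 'I_n])%card.

(* connected n-sheeted coverings of X (all total spaces in C) *)
Definition NCov (n : nat) (X : topologicalType) : Type :=
  {Xp : topologicalType &
    {p : Xp -> X | [/\ is_covering p, connected [set: Xp] & n_sheeted n p]}}.

Definition cov_sp n X (c : NCov n X) : topologicalType := projT1 c.
Definition cov_map n X (c : NCov n X) : cov_sp c -> X := proj1_sig (projT2 c).
Arguments cov_map {n X} c.
Arguments cov_sp {n X} c.

Definition homeomorphism (T U : topologicalType) (phi : T -> U) : Prop :=
  continuous phi /\ exists psi : U -> T,
    [/\ continuous psi, cancel phi psi & cancel psi phi].

Definition cov_iso n X (c d : NCov n X) (phi : cov_sp c -> cov_sp d) : Prop :=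
  homeomorphism phi /\ cov_map d \o phi = cov_map c.

(* Functors C -> C (covariant / contravariant).  The action on maps is  *)
(* given on all functions; only its values on continuous maps matter.  *)

Record cofunctor := CoFunctor {
  coF : topologicalType -> topologicalType;
  coFmap : forall X Y : topologicalType, (X -> Y) -> coF X -> coF Y;
  coFmap_cont : forall (X Y : topologicalType) (f : X -> Y),
      continuous f -> continuous (coFmap f);
  coFmap_id : forall X : topologicalType, coFmap (@id X) = id;
  coFmap_comp : forall (X Y Z : topologicalType) (f : X -> Y) (g : Y -> Z),
      continuous f -> continuous g -> coFmap (g \o f) = coFmap g \o coFmap f
}.

Arguments coFmap c {X Y}.

Record contrafunctor := ContraFunctor {
  ctF : topologicalType -> topologicalType;
  ctFmap : forall X Y : topologicalType, (X -> Y) -> ctF Y -> ctF X;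
  ctFmap_cont : forall (X Y : topologicalType) (f : X -> Y),
      continuous f -> continuous (ctFmap f);
  ctFmap_id : forall X : topologicalType, ctFmap (@id X) = id;
  ctFmap_comp : forall (X Y Z : topologicalType) (f : X -> Y) (g : Y -> Z),
      continuous f -> continuous g -> ctFmap (g \o f) = ctFmap f \o ctFmap g
}.

Arguments ctFmap c {X Y}.

(* The geometric Hecke operator (T(n)F)(X).                            *)
(* Points: classes of pairs (c, y) with c a connected n-sheeted        *)
(* covering of X and y in F(c), modulo isomorphisms of coverings       *)
(* (this is the coproduct over isomorphism classes of F(X')/D(X'/X)).   *)
(* Topology: quotient of the disjoint union topology.                  *)

#[universes(polymorphic)]
Definition eclass (E : Type) (rel : E -> E -> Prop) (e : E) : E -> Prop :=
  fun e' => rel e e'.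
#[universes(polymorphic)]
Definition equot (E : Type) (rel : E -> E -> Prop) : Type :=
  {A : E -> Prop | exists e, A = eclass rel e}.
#[universes(polymorphic)]
Definition ecls (E : Type) (rel : E -> E -> Prop) (e : E) : equot rel :=
  exist _ (eclass rel e) (ex_intro _ e erefl).
Arguments ecls {E} rel e.

Definition coE (F : cofunctor) n X : Type := {c : NCov n X & coF F (cov_sp c)}.
Definition coRel (F : cofunctor) n X (e1 e2 : coE F n X) : Prop :=
  exists phi, cov_iso phi /\ coFmap F phi (projT2 e1) = projT2 e2.
Definition coT (F : cofunctor) n X : Type := equot (@coRel F n X).
Definition coCls (F : cofunctor) n X (c : NCov n X) (y : coF F (cov_sp c)) : coT F n X :=
  ecls (@coRel F n X) (existT _ c y).
Definition coT_open (F : cofunctor) n X (U : coT F n X -> Prop) : Prop :=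
  forall c : NCov n X, open [set y : coF F (cov_sp c) | U (coCls y)].
Definition coT_continuous (F : cofunctor) n X (h : coT F n X -> coT F n X) : Prop :=
  forall U, coT_open U -> coT_open (fun s => U (h s)).

Definition ctE (F : contrafunctor) n X : Type := {c : NCov n X & ctF F (cov_sp c)}.
Definition ctRel (F : contrafunctor) n X (e1 e2 : ctE F n X) : Prop :=
  exists phi, cov_iso phi /\ projT2 e1 = ctFmap F phi (projT2 e2).
Definition ctT (F : contrafunctor) n X : Type := equot (@ctRel F n X).
Definition ctCls (F : contrafunctor) n X (c : NCov n X) (y : ctF F (cov_sp c)) : ctT F n X :=
  ecls (@ctRel F n X) (existT _ c y).
Definition ctT_open (F : contrafunctor) n X (U : ctT F n X -> Prop) : Prop :=
  forall c : NCov n X, open [set y : ctF F (cov_sp c) | U (ctCls y)].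
Definition ctT_continuous (F : contrafunctor) n X (h : ctT F n X -> ctT F n X) : Prop :=
  forall U, ctT_open U -> ctT_open (fun s => U (h s)).

(* Induced maps: for f : X -> Y, a covering p:(X',x0')->(X,x0), the     *)
(* connected covering q:(Y',y0')->(Y,f x0) with q_* pi_1 = f_* p_* pi_1 *)
(* and the lift f~ with f~ x0' = y0'; the induced map sends the class  *)
(* of (X', y) to the class of (Y', F(f~) y) (resp. the other way for   *)
(* contravariant F).  The relation below records these choices.        *)

Definition lift_data n (X Y : topologicalType) (f : X -> Y)
    (c : NCov n X) (x0' : cov_sp c) (d : NCov n Y) (y0' : cov_sp d)
    (ft : cov_sp c -> cov_sp d) : Prop :=
  [/\ cov_map d y0' = f (cov_map c x0'),
      pi1_image (cov_map d) y0' = push f (cov_map c x0') (pi1_image (cov_map c) x0'),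
      continuous ft,
      cov_map d \o ft = f \o cov_map c &
      ft x0' = y0'].

Definition co_induced (F : cofunctor) n (X Y : topologicalType) (f : X -> Y)
    (s : coT F n X) (t : coT F n Y) : Prop :=
  exists (c : NCov n X) (x0' : cov_sp c) (y : coF F (cov_sp c))
         (d : NCov n Y) (y0' : cov_sp d) (ft : cov_sp c -> cov_sp d),
    [/\ s = coCls y, lift_data f x0' y0' ft & t = coCls (coFmap F ft y)].

Definition ct_induced (F : contrafunctor) n (X Y : topologicalType) (f : X -> Y)
    (s : ctT F n Y) (t : ctT F n X) : Prop :=
  exists (c : NCov n X) (x0' : cov_sp c)
         (d : NCov n Y) (y0' : cov_sp d) (z : ctF F (cov_sp d))
         (ft : cov_sp c -> cov_sp d),
    [/\ s = ctCls z, lift_data f x0' y0' ft & t = ctCls (ctFmap F ft z)].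
Arguments co_induced F n {X Y} f s t.
Arguments ct_induced F n {X Y} f s t.

From HB Require Import structures.
From mathcomp Require Import all_boot all_order all_algebra.
From mathcomp Require Import all_classical all_reals.
From mathcomp Require Import topology Rstruct Rstruct_topology normedtype lra.

Set Implicit Arguments.
Unset Strict Implicit.
Unset Printing Implicit Defensive.

Import Order.TTheory GRing.Theory Num.Theory.
Local Open Scope classical_set_scope.

(* A homeomorphism [h] of [X] turns a connected n-sheeted covering [p : X' -> X]
   into the covering [h \o p].  This is the covering of [X] attached to
   [h_* p_* pi_1(X', x0')], and the identity of [X'] lifts [h], so the map
   induced by [h] sends the class of [(p, y)] to the class of [(h \o p, y)].
   Twisting is compatible with isomorphisms of coverings and
   [h1 \o (h2 \o p) = (h1 \o h2) \o p], so the induced maps compose like the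
   group elements; each of them merely relabels the summands of the
   coproduct, hence is continuous. *)

Section PathHomotopy.
Local Open Scope ring_scope.

Lemma continuous_within_comp (T U V : topologicalType) (A : set T) (B : set U)
    (f : T -> U) (g : U -> V) :
  (forall x, A x -> B (f x)) -> {within A, continuous f} ->
  {within B, continuous g} -> {within A, continuous (g \o f)}.
Proof.
move=> fAB /subspace_continuousP fc /subspace_continuousP gc.
apply/subspace_continuousP => x Ax W /= /(gc _ (fAB _ Ax)) /= gW.
have := fc _ Ax _ gW; rewrite /within /= /nbhs /=.
by apply: filterS => z gWz Az; exact: gWz Az (fAB _ Az).
Qed.

Lemma continuous_within_compT (T U V : topologicalType) (A : set T)
    (f : T -> U) (g : U -> V) :
  {within A, continuous f} -> continuous g -> {within A, continuous (g \o f)}.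
Proof.
move=> fc gc; apply: (@continuous_within_comp _ _ _ _ setT) => //.
exact: continuous_subspaceT.
Qed.

Lemma unitIE (s : R) : unitI s = (0 <= s <= 1).
Proof. by rewrite /unitI /= in_itv. Qed.

Lemma closed_unitI2 : closed (unitI `*` unitI).
Proof.
have -> : unitI `*` unitI = fst @^-1` unitI `&` snd @^-1` unitI by [].
have cI : closed unitI by exact: interval_closed.
apply: closedI; apply: (proj1 (continuous_closedP _)) => // p.
  exact: cvg_fst.
exact: cvg_snd.
Qed.

Definition stretch_low (p : R * R) : R * R := (p.1, p.2 + p.2).
Definition stretch_high (p : R * R) : R * R := (p.1, p.2 + p.2 - 1).

Lemma continuous_double : continuous (fun p : R * R => p.2 + p.2).
Proof.
move=> p; apply: (@cvgD R R^o _ (nbhs p) _ snd snd); exact: cvg_snd.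
Qed.

Lemma continuous_stretch_low : continuous stretch_low.
Proof.
move=> p; apply: (@cvg_pair _ _ _ (nbhs p) (nbhs p.1) (nbhs (p.2 + p.2))).
  exact: cvg_fst.
exact: continuous_double.
Qed.

Lemma continuous_stretch_high : continuous stretch_high.
Proof.
move=> p; apply: (@cvg_pair _ _ _ (nbhs p) (nbhs p.1) (nbhs (p.2 + p.2 - 1))).
  exact: cvg_fst.
apply: (@cvgB R R^o _ (nbhs p) _ (fun q : R * R => q.2 + q.2) (fun=> 1)).
  exact: continuous_double.
exact: cvg_cst.
Qed.

Definition stack (T : Type) (H1 H2 : R * R -> T) (p : R * R) : T :=
  if p.2 + p.2 <= 1 then H1 (stretch_low p) else H2 (stretch_high p).

Lemma stack_continuous (T : topologicalType) (H1 H2 : R * R -> T) :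
  {within unitI `*` unitI, continuous H1} ->
  {within unitI `*` unitI, continuous H2} ->
  (forall s, unitI s -> H1 (s, 1) = H2 (s, 0)) ->
  {within unitI `*` unitI, continuous stack H1 H2}.
Proof.
move=> H1c H2c H12.
pose A := stretch_low @^-1` (unitI `*` unitI).
pose B := stretch_high @^-1` (unitI `*` unitI).
have cA : closed A.
  apply: (proj1 (continuous_closedP _)); last exact: closed_unitI2.
  exact: continuous_stretch_low.
have cB : closed B.
  apply: (proj1 (continuous_closedP _)); last exact: closed_unitI2.
  exact: continuous_stretch_high.
have -> : unitI `*` unitI = A `|` B.
  apply/seteqP; split => -[s t]; rewrite /A /B /= !unitIE.
    move=> [-> /andP[t0 t1]].
    by case: (lerP (t + t) 1) => h; [left|right]; split => //; apply/andP; split; lra.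
  by move=> [] [-> /andP[t0 t1]]; split => //; apply/andP; split; lra.
apply: withinU_continuous => //.
- apply: (@subspace_eq_continuous _ _ _ (H1 \o stretch_low)).
    move=> p; rewrite inE /A /stack /= => -[_].
    by rewrite unitIE /from_subspace => /andP[_ ->].
  apply: continuous_within_comp H1c => //.
  exact: continuous_subspaceT continuous_stretch_low.
- apply: (@subspace_eq_continuous _ _ _ (H2 \o stretch_high)).
    move=> [s t]; rewrite inE /B /stack /= => -[Is].
    rewrite unitIE /from_subspace /= => /andP[t0 t1].
    case: (lerP (t + t) 1) => // h; rewrite /stretch_low /stretch_high /=.
    have -> : t + t - 1 = 0 by lra.
    have -> : t + t = 1 by lra.
    by rewrite H12.
  apply: continuous_within_comp H2c => //.
  exact: continuous_subspaceT continuous_stretch_high.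
Qed.

Lemma is_path_comp (T U : topologicalType) (f : T -> U) (a b : T) gam :
  continuous f -> is_path a b gam -> is_path (f a) (f b) (f \o gam).
Proof.
by move=> fc [gc [g0 g1]]; split; [exact: continuous_within_compT|rewrite /= g0 g1].
Qed.

Lemma path_homotopic_comp (T U : topologicalType) (f : T -> U) (a b : T) gam del :
  continuous f -> path_homotopic a b gam del ->
  path_homotopic (f a) (f b) (f \o gam) (f \o del).
Proof.
move=> fc [pg [pd [H [Hc [H0 [H1 [Ha Hb]]]]]]].
do 2 (split; first exact: is_path_comp).
exists (f \o H); split; first exact: continuous_within_compT.
by split; [|split; [|split]] => ? ? /=; rewrite ?H0 ?H1 ?Ha ?Hb.
Qed.

Lemma path_homotopic_refl (T : topologicalType) (a b : T) gam :
  is_path a b gam -> path_homotopic a b gam gam.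
Proof.
move=> pg; do 2 split => //; have [gc _] := pg.
exists (gam \o fst); split; last by case: pg => _ [g0 g1].
apply: continuous_within_comp gc; first by move=> p [].
exact: continuous_subspaceT (fun p => cvg_fst).
Qed.

Lemma path_homotopic_trans (T : topologicalType) (a b : T) g1 g2 g3 :
  path_homotopic a b g1 g2 -> path_homotopic a b g2 g3 -> path_homotopic a b g1 g3.
Proof.
move=> [p1 [_ [H1 [H1c [H10 [H11 [H1a H1b]]]]]]].
move=> [_ [p3 [H2 [H2c [H20 [H21 [H2a H2b]]]]]]].
do 2 split => //; exists (stack H1 H2); split.
  by apply: stack_continuous => // s Is; rewrite H11 // H20.
split; first by move=> s Is; rewrite /stack /stretch_low /= addr0 ler01 H10.
split.
  move=> s Is; rewrite /stack /stretch_high /=.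
  case: (lerP (1 + 1 : R) 1) => h; first by exfalso; lra.
  by rewrite (_ : 1 + 1 - 1 = 1) ?H21 //; lra.
have unitI_double t : unitI t -> if t + t <= 1 then unitI (t + t) else unitI (t + t - 1).
  by rewrite !unitIE => /andP[t0 t1]; case: (lerP (t + t) 1) => h; apply/andP; split; lra.
by split=> t /unitI_double; rewrite /stack /=; case: (lerP (t + t) 1) => _ It;
  rewrite ?H1a ?H1b ?H2a ?H2b.
Qed.

Lemma pi1_image_comp (T U V : topologicalType) (p : T -> U) (f : U -> V) (x : T) :
  continuous p -> continuous f ->
  pi1_image (f \o p) x = push f (p x) (pi1_image p x).
Proof.
move=> pc fc; apply/seteqP; split => del.
  case=> gam lg hd; exists (p \o gam) => //.
  by exists gam => //; apply/path_homotopic_refl/is_path_comp.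
case=> pgam [gam lg h1] h2; exists gam => //.
exact: path_homotopic_trans h2 (path_homotopic_comp fc h1).
Qed.

End PathHomotopy.

Section Quotient.
Variables (E : Type) (rel : E -> E -> Prop).
Hypotheses (rel_refl : forall e, rel e e)
  (rel_sym : forall e e', rel e e' -> rel e' e)
  (rel_trans : forall e1 e2 e3, rel e1 e2 -> rel e2 e3 -> rel e1 e3).

Lemma equot_eq (s t : equot rel) : proj1_sig s = proj1_sig t -> s = t.
Proof.
case: s t => A HA [B HB] /= AB; subst B.
by rewrite (Prop_irrelevance HA HB).
Qed.

Lemma ecls_eq (e e' : E) : rel e e' -> ecls rel e = ecls rel e'.
Proof.
move=> ee'; apply: equot_eq; apply: funext => z; apply: propext.
by split; [exact: rel_trans (rel_sym ee')|exact: rel_trans ee'].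
Qed.

Lemma ecls_rel (e e' : E) : ecls rel e = ecls rel e' -> rel e e'.
Proof.
move=> /(congr1 (@proj1_sig _ _)) /= ee'.
have : eclass rel e' e' by exact: rel_refl.
by rewrite -ee'.
Qed.

Definition erep (s : equot rel) : E := proj1_sig (cid (proj2_sig s)).

Lemma erepK (s : equot rel) : ecls rel (erep s) = s.
Proof. by apply: equot_eq; rewrite /erep; case: cid => e /= ->. Qed.

Lemma ecls_surj (s : equot rel) : exists e, s = ecls rel e.
Proof. by exists (erep s); rewrite erepK. Qed.

Definition equot_map (f : E -> E) (s : equot rel) : equot rel :=
  ecls rel (f (erep s)).

Lemma equot_mapE (f : E -> E) (e : E) :
  (forall e e', rel e e' -> rel (f e) (f e')) ->
  equot_map f (ecls rel e) = ecls rel (f e).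
Proof. by move=> f_homo; apply/ecls_eq/f_homo/ecls_rel; rewrite erepK. Qed.

Lemma equot_map_id (f : E -> E) : (forall e, rel (f e) e) -> equot_map f = id.
Proof. by move=> fe; apply: funext => s /=; rewrite -[RHS]erepK; exact: ecls_eq. Qed.

Lemma equot_map_comp (f g h : E -> E) :
  (forall e e', rel e e' -> rel (f e) (f e')) -> (forall e, rel (f (g e)) (h e)) ->
  equot_map f \o equot_map g = equot_map h.
Proof.
by move=> f_homo fgh; apply: funext => s /=; rewrite equot_mapE //; exact: ecls_eq.
Qed.

End Quotient.

Lemma image_eq_preimage (T U : Type) (h : T -> U) (k : U -> T) (A : set T) :
  cancel h k -> cancel k h -> h @` A = k @^-1` A.
Proof.
move=> hk kh; apply/seteqP; split=> x; first by case=> y Ay <-; rewrite /= hk.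
by move=> Akx; exists (k x).
Qed.

Lemma homeomorphism_open_image (T U : topologicalType) (h : T -> U) (A : set T) :
  homeomorphism h -> open A -> open (h @` A).
Proof.
move=> [_ [k [kc hk kh]]] oA; rewrite (image_eq_preimage _ hk kh).
exact: (proj1 (continuousP _)) kc _ oA.
Qed.

Lemma homeomorphism_id (T : topologicalType) : homeomorphism (@id T).
Proof. by split; [|exists id; split] => // x; exact: cvg_id. Qed.

Lemma homeomorphism_comp (T U V : topologicalType) (phi : T -> U) (chi : U -> V) :
  homeomorphism phi -> homeomorphism chi -> homeomorphism (chi \o phi).
Proof.
move=> [pc [psi [psc c1 c2]]] [cc [om [omc d1 d2]]].
split; first by move=> x; apply: continuous_comp; [exact: pc|exact: cc].
exists (psi \o om); split.
- by move=> x; apply: continuous_comp; [exact: omc|exact: psc].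
- by move=> x /=; rewrite d1 c1.
- by move=> x /=; rewrite c2 d2.
Qed.

Section Coverings.
Variables (n : nat) (X : topologicalType).

Lemma cov_map_continuous (c : NCov n X) : continuous (cov_map c).
Proof. by case: (proj2_sig (projT2 c)) => -[]. Qed.

Lemma NCov_inhabited (c : NCov n X) : (0 < n)%N -> X -> inhabited (cov_sp c).
Proof.
move=> n_pos x0; case: c => Xp [p [_ _ p_n]] /=; apply: contrapT => noXp.
have /card_esym : (p @^-1` [set x0] #= [set: 'I_n])%card := p_n x0.
rewrite (_ : p @^-1` _ = set0); last by apply/seteqP; split => // y _; apply: noXp.
by rewrite card_eq0 => /eqP/seteqP[/(_ (Ordinal n_pos) I)].
Qed.

Lemma cov_iso_id (c : NCov n X) : cov_iso (@id (cov_sp c)).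
Proof. by split; first exact: homeomorphism_id. Qed.

Lemma cov_iso_sym (c d : NCov n X) (phi : cov_sp c -> cov_sp d) :
  cov_iso phi ->
  exists2 psi : cov_sp d -> cov_sp c, cov_iso psi & cancel psi phi /\ cancel phi psi.
Proof.
move=> [[pc [psi [psc phiK psiK]]] phi_cov]; exists psi; last by [].
split; first by split => //; exists phi.
by apply: funext => y /=; rewrite -phi_cov /= psiK.
Qed.

Lemma cov_iso_comp (c1 c2 c3 : NCov n X) (phi : cov_sp c1 -> cov_sp c2)
    (chi : cov_sp c2 -> cov_sp c3) :
  cov_iso phi -> cov_iso chi -> cov_iso (chi \o phi).
Proof.
move=> [hp mp] [hc mc]; split; first exact: homeomorphism_comp.
by rewrite compA mc.
Qed.

End Coverings.

Section Twist.
Variables (n : nat) (X : topologicalType) (h : X -> X) (hh : homeomorphism h).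

Lemma twist_covering (c : NCov n X) :
  [/\ is_covering (h \o cov_map c), connected [set: cov_sp c] &
      n_sheeted n (h \o cov_map c)].
Proof.
have [hc [k [_ hk kh]]] := hh.
case: c => Xp [p [[pc p_cov] Xp_conn p_n]]; rewrite /cov_map /=; split => //.
- split; first by move=> x; apply: continuous_comp; [exact: pc|exact: hc].
  move=> x; have [W [oW Wkx [S [S_homeo S_disj S_cover]]]] := p_cov (k x).
  exists (h @` W); split; [exact: homeomorphism_open_image|by exists (k x)|].
  exists S; split => // [V SV|].
    have [oV [p_inj [pV p_open]]] := S_homeo V SV; split => //; split.
      by move=> a b Va Vb /= /(can_inj hk); exact: p_inj.
    split; first by rewrite -image_comp pV.
    by move=> O oO OV; rewrite -image_comp; apply/homeomorphism_open_image/p_open.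
  rewrite -S_cover; apply/seteqP; split=> y /=; last by exists (p y).
  by case=> w Ww /(can_inj hk) <-.
- move=> x; rewrite (_ : (h \o p) @^-1` [set x] = p @^-1` [set k x]); first exact: p_n.
  by apply/seteqP; split=> y /=; [move=> <-; rewrite hk|move=> ->; rewrite kh].
Qed.

Definition twist (c : NCov n X) : NCov n X :=
  existT _ (cov_sp c) (exist _ (h \o cov_map c) (twist_covering c)).

Lemma twist_map (c : NCov n X) : cov_map (twist c) = h \o cov_map c.
Proof. by []. Qed.

Lemma cov_iso_twist (c d : NCov n X) (phi : cov_sp c -> cov_sp d) :
  cov_iso phi -> cov_iso (c := twist c) (d := twist d) phi.
Proof. by move=> [phi_homeo phi_cov]; split; rewrite // !twist_map -phi_cov. Qed.

Lemma lift_data_twist (c : NCov n X) (x0' : cov_sp c) :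
  lift_data h x0' x0' (c := c) (d := twist c) id.
Proof.
have [hc _] := hh; split => //.
  by rewrite twist_map pi1_image_comp //; exact (@cov_map_continuous _ _ c).
by move=> x; exact: cvg_id.
Qed.

End Twist.

Arguments twist {n X h} hh c.

Section TwistCompose.
Variables (n : nat) (X : topologicalType).

Lemma cov_iso_twist_id (h : X -> X) (hh : homeomorphism h) (c : NCov n X) :
  h =1 id -> cov_iso (c := twist hh c) (d := c) id.
Proof.
move=> h_id; split; first exact: homeomorphism_id.
by rewrite twist_map; apply: funext => x /=; rewrite h_id.
Qed.

Lemma cov_iso_twist_comp (h1 h2 h3 : X -> X) (hh1 : homeomorphism h1)
    (hh2 : homeomorphism h2) (hh3 : homeomorphism h3) (c : NCov n X) :
  h1 \o h2 =1 h3 -> cov_iso (c := twist hh1 (twist hh2 c)) (d := twist hh3 c) id.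
Proof.
move=> h12; split; first exact: homeomorphism_id.
by rewrite !twist_map; apply: funext => x /=; rewrite -h12.
Qed.

Lemma lift_data_untwist (h k : X -> X) (hk : homeomorphism k) (d : NCov n X)
    (x0' : cov_sp d) :
  continuous h -> cancel k h -> lift_data h x0' x0' (c := twist hk d) (d := d) id.
Proof.
move=> hc kK; have [kc _] := hk.
have hkp : h \o (k \o cov_map d) = cov_map d by apply: funext => x /=; rewrite kK.
split => //=; first by rewrite kK.
- rewrite -pi1_image_comp ?hkp //.
  by move=> x; apply: continuous_comp; [exact: cov_map_continuous|exact: kc].
- by move=> x; exact: cvg_id.
Qed.

End TwistCompose.

Section CovariantHecke.
Variables (F : cofunctor) (n : nat) (X : topologicalType).

Lemma coRel_refl (e : coE F n X) : coRel e e.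
Proof.
by case: e => c y; exists id; rewrite coFmap_id; split => //; exact: cov_iso_id.
Qed.

Lemma coRel_sym (e e' : coE F n X) : coRel e e' -> coRel e' e.
Proof.
case: e e' => c y [c' y'] [phi [phi_iso /= <-]].
have [psi psi_iso [_ phiK]] := cov_iso_sym phi_iso; exists psi; split => //=.
have [[[phic _] _] [[psic _] _]] := (phi_iso, psi_iso).
have -> : coFmap F psi (coFmap F phi y) = coFmap F (psi \o phi) y.
  by rewrite coFmap_comp.
by rewrite (_ : psi \o phi = id) ?coFmap_id //; exact: funext phiK.
Qed.

Lemma coRel_trans (e1 e2 e3 : coE F n X) : coRel e1 e2 -> coRel e2 e3 -> coRel e1 e3.
Proof.
case: e1 e2 e3 => c1 y1 [c2 y2] [c3 y3] [phi [phi_iso /= <-]] [chi [chi_iso /= <-]].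
exists (chi \o phi); split; first exact: cov_iso_comp.
have [[[phic _] _] [[chic _] _]] := (phi_iso, chi_iso).
by rewrite /= coFmap_comp.
Qed.

Definition co_twist h (hh : homeomorphism h) (e : coE F n X) : coE F n X :=
  existT _ (twist hh (projT1 e)) (projT2 e).

Lemma coRel_twist h (hh : homeomorphism h) (e e' : coE F n X) :
  coRel e e' -> coRel (co_twist hh e) (co_twist hh e').
Proof.
case: e e' => c y [c' y'] [phi [phi_iso e]].
by exists phi; split => //; exact: cov_iso_twist.
Qed.

Definition coT_twist h (hh : homeomorphism h) : coT F n X -> coT F n X :=
  equot_map (co_twist hh).

Lemma coT_twistE h (hh : homeomorphism h) (c : NCov n X) (y : coF F (cov_sp c)) :
  coT_twist hh (coCls y) = coCls (c := twist hh c) y.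
Proof.
by apply: equot_mapE;
  [exact: coRel_refl|exact: coRel_sym|exact: coRel_trans|exact: coRel_twist].
Qed.

Lemma coT_twist_induced h (hh : homeomorphism h) (s : coT F n X) :
  (0 < n)%N -> X -> co_induced F n h s (coT_twist hh s).
Proof.
move=> n_pos x0; have [[c y] ->] := ecls_surj s.
have [x0'] := NCov_inhabited c n_pos x0.
exists c, x0', y, (twist hh c), x0', id; split => //; first exact: lift_data_twist.
by rewrite coT_twistE coFmap_id.
Qed.

Lemma coT_twist_id h (hh : homeomorphism h) : h =1 id -> coT_twist hh = id.
Proof.
move=> h_id; apply: equot_map_id; [exact: coRel_sym|exact: coRel_trans|] => -[c y].
by exists id; rewrite coFmap_id; split => //; exact: cov_iso_twist_id.
Qed.

Lemma coT_twist_comp h1 h2 h3 (hh1 : homeomorphism h1) (hh2 : homeomorphism h2)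
    (hh3 : homeomorphism h3) :
  h1 \o h2 =1 h3 -> coT_twist hh1 \o coT_twist hh2 = coT_twist hh3.
Proof.
move=> h12; apply: equot_map_comp;
  [exact: coRel_refl|exact: coRel_sym|exact: coRel_trans|exact: coRel_twist|].
by move=> [c y]; exists id; rewrite coFmap_id; split => //; exact: cov_iso_twist_comp.
Qed.

Lemma coT_twist_continuous h (hh : homeomorphism h) : coT_continuous (coT_twist hh).
Proof.
move=> U U_open c; rewrite (_ : [set y | _] = [set y | U (coCls (c := twist hh c) y)]).
  exact: U_open.
by apply: funext => y /=; rewrite coT_twistE.
Qed.

End CovariantHecke.

Section ContravariantHecke.
Variables (F : contrafunctor) (n : nat) (X : topologicalType).

Lemma ctRel_refl (e : ctE F n X) : ctRel e e.
Proof.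
by case: e => c y; exists id; rewrite ctFmap_id; split => //; exact: cov_iso_id.
Qed.

Lemma ctRel_sym (e e' : ctE F n X) : ctRel e e' -> ctRel e' e.
Proof.
case: e e' => c y [c' y'] [phi [phi_iso /= ->]].
have [psi psi_iso [psiK _]] := cov_iso_sym phi_iso; exists psi; split => //=.
have [[[phic _] _] [[psic _] _]] := (phi_iso, psi_iso).
have -> : ctFmap F psi (ctFmap F phi y') = ctFmap F (phi \o psi) y'.
  by rewrite ctFmap_comp.
by rewrite (_ : phi \o psi = id) ?ctFmap_id //; exact: funext psiK.
Qed.

Lemma ctRel_trans (e1 e2 e3 : ctE F n X) : ctRel e1 e2 -> ctRel e2 e3 -> ctRel e1 e3.
Proof.
case: e1 e2 e3 => c1 y1 [c2 y2] [c3 y3] [phi [phi_iso /= ->]] [chi [chi_iso /= ->]].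
exists (chi \o phi); split; first exact: cov_iso_comp.
have [[[phic _] _] [[chic _] _]] := (phi_iso, chi_iso).
by rewrite /= ctFmap_comp.
Qed.

Definition ct_twist h (hh : homeomorphism h) (e : ctE F n X) : ctE F n X :=
  existT _ (twist hh (projT1 e)) (projT2 e).

Lemma ctRel_twist h (hh : homeomorphism h) (e e' : ctE F n X) :
  ctRel e e' -> ctRel (ct_twist hh e) (ct_twist hh e').
Proof.
case: e e' => c y [c' y'] [phi [phi_iso e]].
by exists phi; split => //; exact: cov_iso_twist.
Qed.

Definition ctT_twist h (hh : homeomorphism h) : ctT F n X -> ctT F n X :=
  equot_map (ct_twist hh).

Lemma ctT_twistE h (hh : homeomorphism h) (c : NCov n X) (y : ctF F (cov_sp c)) :
  ctT_twist hh (ctCls y) = ctCls (c := twist hh c) y.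
Proof.
by apply: equot_mapE;
  [exact: ctRel_refl|exact: ctRel_sym|exact: ctRel_trans|exact: ctRel_twist].
Qed.

(* For contravariant [F] the induced map of [h] goes from the coverings of the
   target back to those of the source, i.e. it twists by the inverse [k]. *)
Lemma ctT_twist_induced h k (hk : homeomorphism k) (s : ctT F n X) :
  continuous h -> cancel k h -> (0 < n)%N -> X -> ct_induced F n h s (ctT_twist hk s).
Proof.
move=> hc kK n_pos x0; have [[d z] ->] := ecls_surj s.
have [x0'] := NCov_inhabited d n_pos x0.
exists (twist hk d), x0', d, x0', z, id; split => //; first exact: lift_data_untwist.
by rewrite ctT_twistE ctFmap_id.
Qed.

Lemma ctT_twist_id h (hh : homeomorphism h) : h =1 id -> ctT_twist hh = id.
Proof.
move=> h_id; apply: equot_map_id; [exact: ctRel_sym|exact: ctRel_trans|] => -[c y].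
by exists id; rewrite ctFmap_id; split => //; exact: cov_iso_twist_id.
Qed.

Lemma ctT_twist_comp h1 h2 h3 (hh1 : homeomorphism h1) (hh2 : homeomorphism h2)
    (hh3 : homeomorphism h3) :
  h1 \o h2 =1 h3 -> ctT_twist hh1 \o ctT_twist hh2 = ctT_twist hh3.
Proof.
move=> h12; apply: equot_map_comp;
  [exact: ctRel_refl|exact: ctRel_sym|exact: ctRel_trans|exact: ctRel_twist|].
by move=> [c y]; exists id; rewrite ctFmap_id; split => //; exact: cov_iso_twist_comp.
Qed.

Lemma ctT_twist_continuous h (hh : homeomorphism h) : ctT_continuous (ctT_twist hh).
Proof.
move=> U U_open c; rewrite (_ : [set y | _] = [set y | U (ctCls (c := twist hh c) y)]).
  exact: U_open.
by apply: funext => y /=; rewrite ctT_twistE.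
Qed.

End ContravariantHecke.

Section GroupAction.
Variables (X : topologicalType) (G : Type) (mul : G -> G -> G) (one : G) (inv : G -> G).
Hypotheses (mulA : forall a b c, mul a (mul b c) = mul (mul a b) c)
  (mul1g : forall a, mul one a = a) (mulVg : forall a, mul (inv a) a = one).
Variable act : G -> X -> X.
Hypotheses (act_cont : forall g, continuous (act g)) (act1 : act one = id)
  (actM : forall g h, act (mul g h) = act g \o act h).

Lemma mulgV (a : G) : mul a (inv a) = one.
Proof.
rewrite -[LHS]mul1g -(mulVg (inv a)) -mulA.
by rewrite [mul (inv a) (mul a _)]mulA mulVg mul1g mulVg.
Qed.

Lemma act_invK (g : G) : cancel (act g) (act (inv g)).
Proof. by move=> x; rewrite -[LHS]/((act (inv g) \o act g) x) -actM mulVg act1. Qed.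

Lemma act_Kinv (g : G) : cancel (act (inv g)) (act g).
Proof. by move=> x; rewrite -[LHS]/((act g \o act (inv g)) x) -actM mulgV act1. Qed.

Lemma act_homeomorphism (g : G) : homeomorphism (act g).
Proof.
split => //; exists (act (inv g)).
by split; [exact: act_cont|exact: act_invK|exact: act_Kinv].
Qed.

Lemma act_inv1 : act (inv one) =1 id.
Proof. by move=> x; rewrite -[RHS](act_Kinv one) act1. Qed.

Lemma act_invM (g h : G) : act (inv h) \o act (inv g) =1 act (inv (mul g h)).
Proof.
move=> x /=; apply: (can_inj (act_invK (mul g h))).
by rewrite act_Kinv actM /= !act_Kinv.
Qed.

End GroupAction.

Theorem corollary4p2 (n : nat) (n_pos : (0 < n)%N)
  (X : topologicalType) (x0 : X)
  (X_conn : connected [set: X])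
  (X_lpc : locally_path_connected X)
  (X_slsc : semilocally_simply_connected X)
  (G : Type) (mul : G -> G -> G) (one : G) (inv : G -> G)
  (mulA : forall a b c, mul a (mul b c) = mul (mul a b) c)
  (mul1g : forall a, mul one a = a)
  (mulVg : forall a, mul (inv a) a = one)
  (act : G -> X -> X)
  (act_cont : forall g, continuous (act g))
  (act1 : act one = id)
  (actM : forall g h, act (mul g h) = act g \o act h) :
  (forall F : cofunctor,
     exists T : G -> coT F n X -> coT F n X,
       [/\ forall g s, co_induced F n (act g) s (T g s),
           T one = id,
           forall g h, T (mul g h) = T g \o T h &
           forall g, coT_continuous (T g)]) /\
  (forall F : contrafunctor,
     exists T : G -> ctT F n X -> ctT F n X,
       [/\ forall g s, ct_induced F n (act g) s (T g s),
           T one = id,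
           forall g h, T (mul g h) = T h \o T g &
           forall g, ctT_continuous (T g)]).
Proof.
have act_homeo := act_homeomorphism mulA mul1g mulVg act_cont act1 actM.
split=> F.
- exists (fun g => coT_twist (act_homeo g)); split.
  + by move=> g s; exact: coT_twist_induced.
  + by apply: coT_twist_id => x; rewrite act1.
  + by move=> g h; apply/esym/coT_twist_comp => x; rewrite actM.
  + by move=> g; exact: coT_twist_continuous.
- exists (fun g => ctT_twist (act_homeo (inv g))); split.
  + move=> g s; apply: ctT_twist_induced => //.
    exact: (act_Kinv mulA mul1g mulVg act1 actM).
  + exact/ctT_twist_id/(act_inv1 mulA mul1g mulVg act1 actM).
  + by move=> g h; apply/esym/ctT_twist_comp/(act_invM mulA mul1g mulVg act1 actM).
  + by move=> g; exact: ctT_twist_continuous.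
Qed.
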